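(* Let $\pi_1,\pi_2\colon\mathsf{States}\to\mathbb{R}_{\ge0}$ be potential functions such that $\pi_1\preceq\pi_1\oplus\pi_2$ (where $\pi_1\oplus\pi_2$ is itself used as a potential function). Then for every program $C$ and every $X\in\mathbb{A}_{\pi_1}$: if $\mathrm{mod}(C)\cap\mathrm{Vars}(\pi_2)=\emptyset$ and $X+(\pi_1\oplus\pi_2)\preceq(X+\pi_1)\oplus\pi_2$, then $$\mathsf{aert}_{\pi_1\oplus\pi_2}[\![C]\!](X)\;\preceq\;\big(\mathsf{aert}_{\pi_1}[\![C]\!](X)+\pi_1\big)\oplus\pi_2\;-\;\pi_1\oplus\pi_2 .$$
   Context: States and programs. Fix a finite set $\mathrm{Vars}$ of variables; values are $\mathbb{N}$, locations are $\mathbb{N}_{>0}$. A stack is $s\colon \mathrm{Vars}\to\mathbb{N}$; a heap is a partial map $h$ from a finite set $\mathrm{dom}(h)\subseteq\mathbb{N}_{>0}$ to $\mathbb{N}$. $h_1\perp h_2$ means disjoint domains; then $h_1\star h_2$ is their union; $h_\emptyset$ is the empty heap. $\mathsf{States}$ is the set of pairs $(s,h)$. $s(e)$ is the value of a (heap-independent) arithmetic expression $e$ under $s$, $s\models\varphi$ means the Boolean expression $\varphi$ holds under $s$, $s[x\mapsto v]$ is the updated stack. Programs are generated by $C ::= \mathtt{tick}(e) \mid x:=e \mid x:=\mathtt{alloc}(e) \mid \langle e\rangle:=e' \mid x:=\langle e\rangle \mid \mathtt{free}(e) \mid \{C\}[p]\{C\} \mid \mathtt{if}(\varphi)\{C\}\mathtt{else}\{C\}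 \mid C;C \mid \mathtt{while}(\varphi)\{C\}$, where $p$ is an expression with $s(p)\in[0,1]\cap\mathbb{Q}$ for all $s$. The statements other than tick, probabilistic choice, conditional, sequencing and loops are called atomic. $\mathrm{mod}(C)$ is the set of variables potentially modified by $C$, i.e. the variables $x$ occurring as the target of $x:=e$, $x:=\mathtt{alloc}(e)$ or $x:=\langle e\rangle$ in $C$. For a function $g$ on states, $x\notin\mathrm{Vars}(g)$ means $g(s[x\mapsto v],h)=g(s,h)$ for all $(s,h)$ and $v$. Runtimes. $\mathbb{T}$ is the set of functions $\mathsf{States}\to[0,\infty]$, ordered pointwise by $\preceq$; arithmetic is pointwise with $0\cdot\infty=0$. $[\varphi]$ is the $0/1$-valued Iverson bracket. Truncated subtraction: $a\dot- b=\max(a-b,0)$, $\infty\dot- b=\infty$ for finite $b$, $a\dot-\infty=0$. Separating sum $(f\oplus g)(s,h)=\min\{f(s,h_1)+g(s,h_2)\mid h=h_1\star h_2\}$ (for nonnegative $f,g$); $(f \mathbin{-\!\!\ominus} g)(s,h)=\sup\{g(s,h\star h')\dot- f(s,h')\mid h'\perp h\}$; $(\inf y\colon f)(s,h)=\inf_{v\in\mathbb{N}} f(s[y\mapsto v],h)$, $(\sup y\colon f)(s,h)=\sup_{v\in\mathbb{N}}f(s[y\mapsto v],h)$; $f[x/e](s,h)=f(s[x\mapsto s(e)],h)$. $\mathsf{tm}(e)(s,h)=s(e)$ if $h=h_\emptyset$, else $\infty$; $[e\mapsto e'](s,h)=0$ if $\mathrm{dom}(h)=\{s(e)\}$ and $h(s(e))=s(e')$,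 else $\infty$; $[e\mapsto -](s,h)=0$ if $\mathrm{dom}(h)=\{s(e)\}$, else $\infty$; $\bigoplus_{i=1}^{e} f_i$ is the separating sum over $i=1,\dots,s(e)$ (empty one: $[\mathsf{emp}]$, which is $0$ if $h=h_\emptyset$, else $\infty$). $\mathsf{ert}[\![C]\!]\colon\mathbb{T}\to\mathbb{T}$ (with $v$ fresh): $\mathsf{ert}[\![\mathtt{tick}(e)]\!](f)=\mathsf{tm}(e)\oplus f$; $\mathsf{ert}[\![x:=e]\!](f)=f[x/e]$; $\mathsf{ert}[\![x:=\mathtt{alloc}(e)]\!](f)=\sup v\colon (\bigoplus_{i=1}^{e}[v+i-1\mapsto 0])\mathbin{-\!\!\ominus} f[x/v]$; $\mathsf{ert}[\![\langle e\rangle:=e']\!](f)=[e\mapsto-]\oplus([e\mapsto e']\mathbin{-\!\!\ominus} f)$; $\mathsf{ert}[\![x:=\langle e\rangle]\!](f)=\inf v\colon [e\mapsto v]\oplus([e\mapsto v]\mathbin{-\!\!\ominus} f[x/v])$; $\mathsf{ert}[\![\mathtt{free}(e)]\!](f)=[e\mapsto-]\oplus f$; $\mathsf{ert}[\![C_1;C_2]\!](f)=\mathsf{ert}[\![C_1]\!](\mathsf{ert}[\![C_2]\!](f))$; conditional: $[\varphi]\cdot\mathsf{ert}[\![C_1]\!](f)+[\neg\varphi]\cdot\mathsf{ert}[\![C_2]\!](f)$; probabilistic choice: $p\cdot\mathsf{ert}[\![C_1]\!](f)+(1-p)\cdot\mathsf{ert}[\![C_2]\!](f)$; $\mathsf{ert}[\![\mathtt{while}(\varphi)\{C\}]\!](f)=\mathrm{lfp}\,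 g.\ [\neg\varphi]\cdot f+[\varphi]\cdot\mathsf{ert}[\![C]\!](g)$. Amortized runtimes. A potential function is $\pi\colon\mathsf{States}\to\mathbb{R}_{\ge0}$. $\mathbb{A}_\pi=\{X\colon\mathsf{States}\to\mathbb{R}\cup\{\infty\}\mid -\pi\le X\}$, ordered pointwise (complete lattice, least element $-\pi$). $\mathsf{aert}_\pi[\![C]\!]\colon\mathbb{A}_\pi\to\mathbb{A}_\pi$: $\mathsf{aert}_\pi[\![\mathtt{tick}(e)]\!](X)=e+X$; for atomic $C$ other than tick, $\mathsf{aert}_\pi[\![C]\!](X)=\mathsf{ert}[\![C]\!](X+\pi)-\pi$; sequencing by composition; conditional $[\varphi]\cdot\mathsf{aert}_\pi[\![C_1]\!](X)+[\neg\varphi]\cdot\mathsf{aert}_\pi[\![C_2]\!](X)$; probabilistic choice $p\cdot\mathsf{aert}_\pi[\![C_1]\!](X)+(1-p)\cdot\mathsf{aert}_\pi[\![C_2]\!](X)$; $\mathsf{aert}_\pi[\![\mathtt{while}(\varphi)\{C'\}]\!](X)=\mathrm{lfp}\,Y.\ [\neg\varphi]\cdot X+[\varphi]\cdot\mathsf{aert}_\pi[\![C']\!](Y)$ in $(\mathbb{A}_\pi,\preceq)$. *)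

From HB Require Import structures.
From mathcomp Require Import all_boot all_order all_algebra.
From mathcomp Require Import finmap.
From mathcomp Require Import boolp classical_sets reals constructive_ereal ereal.

Set Implicit Arguments.
Unset Strict Implicit.
Unset Printing Implicit Defensive.

Import Order.TTheory GRing.Theory Num.Theory.

Definition loc := {n : nat | (0 < n)%N}.

Definition stack (V : finType) := V -> nat.
Definition heap := {fmap loc -> nat}.
Definition state (V : finType) := (stack V * heap)%type.

Definition aexp (V : finType) := stack V -> nat.
Definition bexp (V : finType) := stack V -> bool.
Definition prob := {q : rat | (0 <= q <= 1)%R}.
Definition pexp (V : finType) := stack V -> prob.

Definition cst (V : finType) (n : nat) : aexp V := fun _ => n.

Definition upd (V : finType) (s : stack V) (x : V) (v : nat) : stack V :=
  fun y => if y == x then v else s y.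

Definition hdisj (h1 h2 : heap) : bool := fdisjoint (domf h1) (domf h2).
Definition hunion (h1 h2 : heap) : heap := catf h1 h2.

Inductive prog (V : finType) : Type :=
| Tick of aexp V
| Assign of V & aexp V
| Alloc of V & aexp V
| Store of aexp V & aexp V          (* <e> := e' *)
| Lookup of V & aexp V                (* x := <e>  *)
| Free of aexp V
| PChoice of prog V & pexp V & prog V
| If of bexp V & prog V & prog V
| Seq of prog V & prog V
| While of bexp V & prog V.

Fixpoint mods (V : finType) (C : prog V) : seq V :=
  match C with
  | Tick _ => [::]
  | Assign x _ => [:: x]
  | Alloc x _ => [:: x]
  | Store _ _ => [::]
  | Lookup x _ => [:: x]
  | Free _ => [::]
  | PChoice C1 _ C2 => mods C1 ++ mods C2
  | If _ C1 C2 => mods C1 ++ mods C2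
  | Seq C1 C2 => mods C1 ++ mods C2
  | While _ C1 => mods C1
  end.

Definition notinVars (V : finType) (T : Type) (x : V) (g : state V -> T) : Prop :=
  forall (s : stack V) (h : heap) (v : nat), g (upd s x v, h) = g (s, h).

Local Open Scope ereal_scope.

Section Runtimes.
Variables (R : realType) (V : finType).

(** Functions on states with extended-real values; runtimes (T) are the
    nonnegative ones, amortized runtimes (A_pi) those above -pi. *)
Definition fn := state V -> \bar R.

Definition liftE (f : state V -> R) : fn := fun st => (f st)%:E.

Definition fadd (f g : fn) : fn := fun st => f st + g st.

Definition tsub (a b : \bar R) : \bar R :=
  if b == +oo then 0 else maxe (a - b) 0.

Definition ind (P : Prop) : \bar R := if `[< P >] then 0 else +oo.
Definition iv (b : bool) : \bar R := (b%:R)%:E.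

Definition sepsum (f g : fn) : fn := fun st =>
  ereal_inf [set x | exists h1 h2, hdisj h1 h2 /\ st.2 = hunion h1 h2 /\
                                   x = f (st.1, h1) + g (st.1, h2)].

Definition wand (f g : fn) : fn := fun st =>
  ereal_sup [set x | exists h', hdisj st.2 h' /\
                    x = tsub (g (st.1, hunion st.2 h')) (f (st.1, h'))].

Definition emp : fn := fun st => if st.2 == [fmap]%fmap then 0 else +oo.

Definition tm (e : aexp V) : fn := fun st =>
  if st.2 == [fmap]%fmap then ((e st.1)%:R)%:E else +oo.

Definition ptsto (e e' : aexp V) : fn := fun st =>
  ind (exists l : loc, val l = e st.1 /\ st.2 = ([fmap].[l <- e' st.1])%fmap).

Definition ptsany (e : aexp V) : fn := fun st =>
  ind (exists (l : loc) (v : nat), val l = e st.1 /\ st.2 = ([fmap].[l <- v])%fmap).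

Fixpoint bigsep (n : nat) (F : nat -> fn) : fn :=
  match n with
  | 0 => emp
  | n'.+1 => sepsum (bigsep n' F) (F n'.+1)
  end.

Definition subst (f : fn) (x : V) (e : aexp V) : fn := fun st =>
  f (upd st.1 x (e st.1), st.2).

(** Least fixed point of Phi in the complete lattice {Y | P Y} (pointwise
    order), given (Knaster–Tarski) as the pointwise infimum of its
    pre-fixed points. *)
Definition lfp (P : fn -> Prop) (Phi : fn -> fn) : fn := fun st =>
  ereal_inf [set Y st | Y in [set Y | P Y /\ (forall st', Phi Y st' <= Y st')]].

Definition pr (p : pexp V) (s : stack V) : R := ratr (val (p s)).

Fixpoint ert (C : prog V) (f : fn) {struct C} : fn :=
  match C with
  | Tick e => sepsum (tm e) f
  | Assign x e => subst f x e
  | Alloc x e => fun st =>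
      ereal_sup [set wand (fun st' => bigsep (e st'.1)
                            (fun i => ptsto (fun _ => (n + i - 1)%N) (@cst V 0)) st')
                          (subst f x (@cst V n)) st | n in [set: nat]]
  | Store e e' => sepsum (ptsany e) (wand (ptsto e e') f)
  | Lookup x e => fun st =>
      ereal_inf [set sepsum (ptsto e (@cst V n))
                            (wand (ptsto e (@cst V n)) (subst f x (@cst V n))) st
                | n in [set: nat]]
  | Free e => sepsum (ptsany e) f
  | PChoice C1 p C2 => fun st =>
      (pr p st.1)%:E * ert C1 f st + (1 - pr p st.1)%:E * ert C2 f st
  | If b C1 C2 => fun st =>
      iv (b st.1) * ert C1 f st + iv (~~ b st.1) * ert C2 f st
  | Seq C1 C2 => ert C1 (ert C2 f)
  | While b C1 =>
      lfp (fun g => forall st, 0 <= g st)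
          (fun g st => iv (~~ b st.1) * f st + iv (b st.1) * ert C1 g st)
  end.

(** Amortized expected runtime w.r.t. potential pi (pi finite-valued, >= 0). *)
Fixpoint aert (pi : fn) (C : prog V) (X : fn) {struct C} : fn :=
  match C with
  | Tick e => fun st => ((e st.1)%:R)%:E + X st
  | Assign x e => fun st => ert (Assign x e) (fadd X pi) st - pi st
  | Alloc x e => fun st => ert (Alloc x e) (fadd X pi) st - pi st
  | Store e e' => fun st => ert (Store e e') (fadd X pi) st - pi st
  | Lookup x e => fun st => ert (Lookup x e) (fadd X pi) st - pi st
  | Free e => fun st => ert (Free e) (fadd X pi) st - pi st
  | PChoice C1 p C2 => fun st =>
      (pr p st.1)%:E * aert pi C1 X st + (1 - pr p st.1)%:E * aert pi C2 X st
  | If b C1 C2 => fun st =>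
      iv (b st.1) * aert pi C1 X st + iv (~~ b st.1) * aert pi C2 X st
  | Seq C1 C2 => aert pi C1 (aert pi C2 X)
  | While b C1 =>
      lfp (fun Y => forall st, - pi st <= Y st)
          (fun Y st => iv (~~ b st.1) * X st + iv (b st.1) * aert pi C1 Y st)
  end.

Definition inA (pi : fn) (X : fn) : Prop := forall st, - pi st <= X st.

End Runtimes.

From HB Require Import structures.
From mathcomp Require Import all_boot all_order all_algebra.
From mathcomp Require Import finmap.
From mathcomp Require Import boolp classical_sets reals constructive_ereal ereal.

Import Order.TTheory GRing.Theory Num.Theory.
Set Implicit Arguments.
Unset Strict Implicit.
Unset Printing Implicit Defensive.
Local Open Scope ereal_scope.

(* The expected runtime of an atomic statement C satisfies the frame inequality
   ert C (f (+) g) <= ert C f (+) g whenever C modifies no variable of g, since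
   substitution, the magic wand and the separating sum each let such a g be
   framed out.  The theorem is then proved for an arbitrary finite potential P
   in place of pi1 (+) pi2, by induction on C, for the invariant
   Z + P <= (Y + pi1) (+) pi2 between a P-amortized runtime Z and a
   pi1-amortized runtime Y.  Every construct preserves it; for a loop, the
   function ((L + pi1) (+) pi2) - P, where L is the pi1-amortized least fixed
   point, is a pre-fixed point of the P-amortized loop functional. *)

Lemma hdisjC a b : hdisj a b = hdisj b a.
Proof. by rewrite /hdisj fdisjoint_sym. Qed.

Lemma hdisjUl a b c : hdisj (hunion a b) c = hdisj a c && hdisj b c.
Proof. by rewrite /hdisj /hunion domf_cat fdisjointUX. Qed.

Lemma hdisjUr a b c : hdisj a (hunion b c) = hdisj a b && hdisj a c.
Proof. by rewrite /hdisj /hunion domf_cat fdisjointXU. Qed.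

Lemma hdisj0 a : hdisj a [fmap]%fmap.
Proof. by rewrite /hdisj domf0 fdisjointX0. Qed.

Lemma hunionA a b c : hunion a (hunion b c) = hunion (hunion a b) c.
Proof. by rewrite /hunion catfA. Qed.

Lemma hunionC a b : hdisj a b -> hunion a b = hunion b a.
Proof. by move=> dab; rewrite /hunion disjoint_catfC. Qed.

Lemma hunion0 a : hunion a [fmap]%fmap = a.
Proof. by rewrite /hunion catf0. Qed.

Section SeparationLogic.
Variables (R : realType) (V : finType).
Implicit Types (f g B : fn R V).

Lemma sepsum_le_split f g s h1 h2 : hdisj h1 h2 ->
  sepsum f g (s, hunion h1 h2) <= f (s, h1) + g (s, h2).
Proof. by move=> d12; apply: ge_ereal_inf; exists (f (s, h1) + g (s, h2)) => //; exists h1, h2. Qed.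

Lemma sepsum_glb f g st M :
  (forall h1 h2, hdisj h1 h2 -> st.2 = hunion h1 h2 ->
     M <= f (st.1, h1) + g (st.1, h2)) ->
  M <= sepsum f g st.
Proof. by move=> HM; apply: le_ereal_inf_tmp => _ [h1 [h2 [d12 [e12 ->]]]]; exact: HM. Qed.

Lemma sepsum_ge0 f g st : (forall st, 0 <= f st) -> (forall st, 0 <= g st) ->
  0 <= sepsum f g st.
Proof. by move=> f_ge0 g_ge0; apply: sepsum_glb => *; apply: adde_ge0. Qed.

Lemma sepsum_mono_stack f f' g g' s :
  (forall h, f (s, h) <= f' (s, h)) -> (forall h, g (s, h) <= g' (s, h)) ->
  forall h, sepsum f g (s, h) <= sepsum f' g' (s, h).
Proof.
move=> ff' gg' h; apply: sepsum_glb => h1 h2 d12 /= ->.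
by apply: le_trans (sepsum_le_split _ _ _ d12) _; apply: leeD.
Qed.

Lemma sepsum_mono f f' g g' :
  (forall st, f st <= f' st) -> (forall st, g st <= g' st) ->
  forall st, sepsum f g st <= sepsum f' g' st.
Proof. by move=> ff' gg' [s h]; apply: sepsum_mono_stack. Qed.

Lemma sepsumA_le B f g st : (forall st, g st \is a fin_num) ->
  sepsum B (sepsum f g) st <= sepsum (sepsum B f) g st.
Proof.
move=> g_fin; case: st => s h; apply: sepsum_glb => k1 k2 dk /= ->.
rewrite -leeBlDr //; apply: sepsum_glb => a b dab /= k1E; subst k1.
rewrite leeBlDr //.
move: dk; rewrite hdisjUl => /andP[dak dbk].
have da_bk : hdisj a (hunion b k2) by rewrite hdisjUr dab dak.
rewrite -hunionA; apply: le_trans (sepsum_le_split _ _ _ da_bk) _.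
by rewrite -addeA; apply: leeD2l; apply: sepsum_le_split.
Qed.

Lemma tsub_ge0 (a b : \bar R) : 0 <= tsub a b.
Proof. by rewrite /tsub; case: ifP => // _; rewrite le_max lexx orbT. Qed.

Lemma tsub_le (a a' b : \bar R) : a <= a' -> tsub a b <= tsub a' b.
Proof.
move=> aa'; rewrite /tsub; case: ifP => // _.
by rewrite ge_max !le_max lexx !orbT andbT leeB.
Qed.

Lemma tsub_addr (a c b : \bar R) : 0 <= a -> 0 <= c ->
  tsub (a + c) b <= tsub a b + c.
Proof.
rewrite /tsub; case: ifP => [_|b_fin a_ge0 c_ge0]; first by rewrite add0e.
rewrite ge_max adde_ge0 ?le_max ?lexx ?orbT // andbT.
apply: (@le_trans _ _ ((a - b) + c)); last by apply: leeD2r; rewrite le_max lexx.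
by move: a b c a_ge0 c_ge0 b_fin => [a| |] [b| |] [c| |] //= *; rewrite ?leey // addeAC.
Qed.

Lemma wand_ge0 B f st : 0 <= wand B f st.
Proof.
apply: le_ereal_sup_tmp; exists (tsub (f (st.1, hunion st.2 [fmap]%fmap)) (B (st.1, [fmap]%fmap))).
  by exists [fmap]%fmap; split => //; apply: hdisj0.
exact: tsub_ge0.
Qed.

Lemma wand_mono B f f' : (forall st, f st <= f' st) ->
  forall st, wand B f st <= wand B f' st.
Proof.
move=> ff' st; apply: ge_ereal_sup => _ [h' [dh' ->]].
apply: le_ereal_sup_tmp; exists (tsub (f' (st.1, hunion st.2 h')) (B (st.1, h'))).
  by exists h'.
exact: tsub_le.
Qed.

Lemma wand_sepsum_frame B f g st :
  (forall st, 0 <= f st) -> (forall st, 0 <= g st) ->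
  wand B (sepsum f g) st <= sepsum (wand B f) g st.
Proof.
move=> f_ge0 g_ge0; case: st => s h; apply: sepsum_glb => h1 h2 d12 /= ->.
apply: ge_ereal_sup => _ [h' [dh' ->]] /=.
move: dh'; rewrite hdisjUl => /andP[d1' d2'].
have d1'2 : hdisj (hunion h1 h') h2 by rewrite hdisjUl d12 hdisjC d2'.
rewrite -hunionA (hunionC d2') hunionA.
apply: le_trans (tsub_le _ (sepsum_le_split _ _ _ d1'2)) _.
apply: le_trans (tsub_addr _ _ _) _ => //; apply: leeD2r.
by apply: le_ereal_sup_tmp; exists (tsub (f (s, hunion h1 h')) (B (s, h'))) => //; exists h'.
Qed.

Lemma subst_sepsum_frame f g x e st : notinVars x g ->
  subst (sepsum f g) x e st <= sepsum (subst f x e) g st.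
Proof.
move=> gx; case: st => s h; apply: sepsum_glb => h1 h2 d12 /= ->.
by rewrite /subst /= -(gx s h2 (e s)); apply: sepsum_le_split.
Qed.

Lemma ind_ge0 P : 0 <= ind R P.
Proof. by rewrite /ind; case: ifP; rewrite ?leey. Qed.

End SeparationLogic.

Section AtomicErt.
Variables (R : realType) (V : finType).
Implicit Types (f g : fn R V) (C : prog V).

Definition atomic C : bool :=
  match C with
  | Assign _ _ | Alloc _ _ | Store _ _ | Lookup _ _ | Free _ => true
  | _ => false
  end.

Lemma ert_atomic_mono C f f' : atomic C -> (forall st, f st <= f' st) ->
  forall st, ert C f st <= ert C f' st.
Proof.
case: C => // [x e|x e|e e'|x e|e] _ ff' st /=.
- exact: ff'.
- apply: ge_ereal_sup => _ [n _ <-]; apply: le_ereal_sup_tmp.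
  by eexists; [exists n | apply: wand_mono => st'; exact: ff'].
- by apply: sepsum_mono => // st'; apply: wand_mono.
- apply: le_ereal_inf_tmp => _ [n _ <-]; apply: ge_ereal_inf.
  eexists; first by exists n.
  by apply: sepsum_mono => // st'; apply: wand_mono => st''; exact: ff'.
- exact: sepsum_mono.
Qed.

Lemma ert_atomic_ge0 C f : atomic C -> (forall st, 0 <= f st) ->
  forall st, 0 <= ert C f st.
Proof.
case: C => // [x e|x e|e e'|x e|e] _ f_ge0 st /=.
- exact: f_ge0.
- by apply: le_ereal_sup_tmp; eexists; [by exists 0%N | exact: wand_ge0].
- by apply: sepsum_ge0 => st'; [exact: ind_ge0 | exact: wand_ge0].
- apply: le_ereal_inf_tmp => _ [n _ <-].
  by apply: sepsum_ge0 => st'; [exact: ind_ge0 | exact: wand_ge0].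
- by apply: sepsum_ge0 => // st'; exact: ind_ge0.
Qed.

Lemma ert_atomic_frame C f g : atomic C ->
  (forall x, x \in mods C -> notinVars x g) ->
  (forall st, 0 <= f st) -> (forall st, 0 <= g st) ->
  (forall st, g st \is a fin_num) ->
  forall st, ert C (sepsum f g) st <= sepsum (ert C f) g st.
Proof.
case: C => // [x e|x e|e e'|x e|e] _ g_mods f_ge0 g_ge0 g_fin st /=.
- by apply: subst_sepsum_frame; apply: g_mods; rewrite inE.
- have gx : notinVars x g by apply: g_mods; rewrite inE.
  apply: ge_ereal_sup => _ [n _ <-].
  apply: le_trans (wand_mono _ (fun st' => subst_sepsum_frame _ _ st' gx) st) _.
  apply: le_trans (wand_sepsum_frame _ st (fun st' => f_ge0 _) g_ge0) _.
  case: st => s h; apply: sepsum_mono_stack => // h'.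
  apply: le_ereal_sup_tmp; eexists; first by exists n.
  exact: lexx.
- apply: le_trans _ (sepsumA_le _ _ st g_fin).
  by apply: sepsum_mono => // st'; exact: wand_sepsum_frame.
- have gx : notinVars x g by apply: g_mods; rewrite inE.
  case: st => s h; apply: sepsum_glb => h1 h2 d12 /= ->.
  rewrite -leeBlDr //; apply: le_ereal_inf_tmp => _ [n _ <-]; rewrite leeBlDr //.
  apply: ge_ereal_inf; eexists; first by exists n.
  apply: le_trans _ (sepsum_le_split _ _ _ d12).
  apply: le_trans _ (sepsumA_le _ _ _ g_fin); apply: sepsum_mono => // st'.
  apply: le_trans (wand_mono _ (fun st'' => subst_sepsum_frame _ _ st'' gx) st') _.
  exact: (wand_sepsum_frame _ st' (fun st'' => f_ge0 _) g_ge0).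
- exact: sepsumA_le.
Qed.

End AtomicErt.

Section Aert.
Variables (R : realType) (V : finType).
Implicit Types (f X Y pi : fn R V) (C : prog V).

Lemma prog_atomic_ind (Q : prog V -> Prop) :
  (forall e, Q (Tick e)) ->
  (forall C, atomic C -> Q C) ->
  (forall C1 p C2, Q C1 -> Q C2 -> Q (PChoice C1 p C2)) ->
  (forall b C1 C2, Q C1 -> Q C2 -> Q (If b C1 C2)) ->
  (forall C1 C2, Q C1 -> Q C2 -> Q (Seq C1 C2)) ->
  (forall b C, Q C -> Q (While b C)) ->
  forall C, Q C.
Proof. by move=> Qtick Qatomic Qpchoice Qif Qseq Qwhile; elim=> *; auto. Qed.

Lemma aert_atomicE pi C X st : atomic C ->
  aert pi C X st = ert C (fadd X pi) st - pi st.
Proof. by case: C. Qed.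

Lemma iv_select b (x y : \bar R) : iv R b * x + iv R (~~ b) * y = if b then x else y.
Proof. by case: b; rewrite /iv /= ?mul1e mul0e ?adde0 ?add0e. Qed.

Lemma iv_ge0 b : 0 <= iv R b.
Proof. by rewrite lee_fin ler0n. Qed.

Lemma pr_ge0 (p : pexp V) s : 0 <= (pr R p s)%:E.
Proof. by rewrite lee_fin /pr ler0q; case: (p s) => q /= /andP[]. Qed.

Lemma pr_compl_ge0 (p : pexp V) s : 0 <= (1 - pr R p s)%:E.
Proof.
rewrite lee_fin subr_ge0 /pr; case: (p s) => q /= /andP[_].
by rewrite -(ler_rat R) rmorph1.
Qed.

Lemma conv_const (p : R) (c : \bar R) : c \is a fin_num ->
  p%:E * c + (1 - p)%:E * c = c.
Proof. by move: c => [r| |] // _; rewrite -!EFinM -EFinD -mulrDl subrKC mul1r. Qed.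

Lemma conv_addr (p : R) (c x y : \bar R) : c \is a fin_num ->
  p%:E * (x + c) + (1 - p)%:E * (y + c) = p%:E * x + (1 - p)%:E * y + c.
Proof.
by move=> c_fin; rewrite !muleDr ?fin_num_adde_defl // addeACA conv_const.
Qed.

Section LeastFixpoint.
Variables (P : fn R V -> Prop) (Phi : fn R V -> fn R V).

Lemma lfp_le Y st : P Y -> (forall st, Phi Y st <= Y st) -> lfp P Phi st <= Y st.
Proof. by move=> PY preY; apply: ge_ereal_inf; exists (Y st) => //; exists Y. Qed.

Lemma lfp_ge m st : (forall Y, P Y -> m <= Y st) -> m <= lfp P Phi st.
Proof. by move=> mP; apply: le_ereal_inf_tmp => _ [Y [PY _] <-]; exact: mP. Qed.

Lemma lfp_prefixed :
  (forall Y Y', (forall st, Y st <= Y' st) -> forall st, Phi Y st <= Phi Y' st) ->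
  forall st, Phi (lfp P Phi) st <= lfp P Phi st.
Proof.
move=> Phi_mono st; apply: le_ereal_inf_tmp => _ [Y [PY preY] <-].
by apply: le_trans (preY st); apply: Phi_mono => st'; exact: lfp_le.
Qed.

End LeastFixpoint.

Lemma lfp_mono P Phi Phi' st :
  (forall Y, P Y -> forall st, Phi Y st <= Phi' Y st) ->
  lfp P Phi st <= lfp P Phi' st.
Proof.
move=> PhiPhi'; apply: le_ereal_inf_tmp => _ [Y [PY preY] <-].
by apply: lfp_le => // st'; apply: le_trans (preY st'); exact: PhiPhi'.
Qed.

Lemma aert_mono pi C X X' : (forall st, X st <= X' st) ->
  forall st, aert pi C X st <= aert pi C X' st.
Proof.
elim/prog_atomic_ind: C X X' => [e|C atC|C1 p C2 IH1 IH2|b C1 C2 IH1 IH2|C1 C2 IH1 IH2|b C IH]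
  X X' XX' st.
- exact: leeD2l.
- rewrite !aert_atomicE //; apply: leeB (lexx _).
  by apply: ert_atomic_mono => // st'; exact: leeD2r.
- by apply: leeD; apply: lee_wpmul2l; rewrite ?pr_ge0 ?pr_compl_ge0 //; [apply: IH1 | apply: IH2].
- by apply: leeD; apply: lee_wpmul2l; rewrite ?iv_ge0 //; [apply: IH1 | apply: IH2].
- by apply: IH1; apply: IH2.
- by apply: lfp_mono => Y _ st'; apply: leeD2r; apply: lee_wpmul2l; [exact: iv_ge0 | exact: XX'].
Qed.

Lemma aert_inA pi C X : (forall st, pi st \is a fin_num) ->
  inA pi X -> inA pi (aert pi C X).
Proof.
move=> pi_fin; elim/prog_atomic_ind: C X => [e|C atC|C1 p C2 IH1 IH2|b C1 C2 IH1 IH2|C1 C2 IH1 IH2|b C IH]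
  X X_inA st /=.
- by apply: lee_paddl => //; rewrite lee_fin ler0n.
- rewrite aert_atomicE // leeBrDr // addeC subee //.
  by apply: ert_atomic_ge0 => // st'; rewrite /fadd -leeBlDr // sub0e.
- rewrite -[leLHS](@conv_const (pr R p st.1)) ?fin_numN //.
  by apply: leeD; apply: lee_wpmul2l; rewrite ?pr_ge0 ?pr_compl_ge0 //; [apply: IH1 | apply: IH2].
- by rewrite iv_select; case: ifP => _; [apply: IH1 | apply: IH2].
- by apply: IH1; apply: IH2.
- by apply: lfp_ge => Y; apply.
Qed.

End Aert.

Lemma forall_mem_cat (T : eqType) (s1 s2 : seq T) (Q : T -> Prop) :
  (forall x, x \in s1 ++ s2 -> Q x) ->
  (forall x, x \in s1 -> Q x) /\ (forall x, x \in s2 -> Q x).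
Proof. by move=> Qs; split=> x xs; apply: Qs; rewrite mem_cat xs ?orbT. Qed.

Section Frame.
Variables (R : realType) (V : finType) (pi1 pi2 P : fn R V).
Hypotheses (pi1_fin : forall st, pi1 st \is a fin_num)
           (pi2_fin : forall st, pi2 st \is a fin_num)
           (pi2_ge0 : forall st, 0 <= pi2 st)
           (P_fin : forall st, P st \is a fin_num).
Implicit Types (Z Y : fn R V) (C : prog V).

Definition framed Z Y := forall st, Z st + P st <= sepsum (fadd Y pi1) pi2 st.

Definition frame_preserving C := forall Z Y, inA pi1 Y -> framed Z Y ->
  framed (aert P C Z) (aert pi1 C Y).

Lemma fadd_ge0 Y : inA pi1 Y -> forall st, 0 <= fadd Y pi1 st.
Proof. by move=> Y_inA st; rewrite /fadd -leeBlDr // sub0e. Qed.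

Lemma frame_preserving_tick e : frame_preserving (Tick e).
Proof.
move=> Z Y _ ZY [s h] /=; rewrite -addeA.
apply: sepsum_glb => h1 h2 d12 /= ->; rewrite /fadd /= -!addeA leeD2l //.
by apply: le_trans (ZY _) _; rewrite addeA; exact: sepsum_le_split.
Qed.

Lemma frame_preserving_atomic C : atomic C ->
  (forall x, x \in mods C -> notinVars x pi2) -> frame_preserving C.
Proof.
move=> atC pi2_mods Z Y Y_inA ZY st.
have -> : fadd (aert pi1 C Y) pi1 = ert C (fadd Y pi1).
  by apply: funext => st'; rewrite /fadd aert_atomicE // subeK.
rewrite aert_atomicE // subeK //.
apply: le_trans (ert_atomic_frame atC pi2_mods (fadd_ge0 Y_inA) pi2_ge0 pi2_fin st).
exact: ert_atomic_mono.
Qed.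

Lemma frame_preserving_pchoice C1 p C2 : frame_preserving C1 -> frame_preserving C2 ->
  frame_preserving (PChoice C1 p C2).
Proof.
move=> IH1 IH2 Z Y Y_inA ZY [s h] /=; rewrite -conv_addr //.
apply: le_trans (leeD (lee_wpmul2l (pr_ge0 _ p s) (IH1 Z Y Y_inA ZY (s, h)))
                      (lee_wpmul2l (pr_compl_ge0 _ p s) (IH2 Z Y Y_inA ZY (s, h)))) _.
apply: sepsum_glb => h1 h2 d12 /= ->.
rewrite /fadd /= -addeA -conv_addr ?fin_numD ?pi1_fin ?pi2_fin //.
by apply: leeD; apply: lee_wpmul2l; rewrite ?pr_ge0 ?pr_compl_ge0 // addeA;
  exact: sepsum_le_split.
Qed.

Lemma frame_preserving_if b C1 C2 : frame_preserving C1 -> frame_preserving C2 ->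
  frame_preserving (If b C1 C2).
Proof.
move=> IH1 IH2 Z Y Y_inA ZY [s h] /=; rewrite iv_select.
apply: le_trans (_ : sepsum (fadd (aert pi1 (if b s then C1 else C2) Y) pi1) pi2 (s, h) <= _).
  by case: (b s); [apply: IH1 | apply: IH2].
by apply: sepsum_mono_stack => // h'; rewrite /fadd /= iv_select; case: (b s).
Qed.

Lemma frame_preserving_seq C1 C2 : frame_preserving C1 -> frame_preserving C2 ->
  frame_preserving (Seq C1 C2).
Proof. by move=> IH1 IH2 Z Y Y_inA ZY; apply: IH1 (aert_inA _ _ _) (IH2 _ _ _ _). Qed.

Lemma frame_preserving_while b C : frame_preserving C ->
  frame_preserving (While b C).
Proof.
move=> IH Z Y Y_inA ZY; set L := aert pi1 (While b C) Y.
have L_inA : inA pi1 L by apply: aert_inA.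
have L_pre st : (if b st.1 then aert pi1 C L st else Y st) <= L st.
  rewrite -iv_select addeC; apply: lfp_prefixed => Y1 Y2 Y12 st'.
  by apply: leeD2l; apply: lee_wpmul2l; [exact: iv_ge0 | exact: aert_mono].
have L_dom s h : sepsum (fadd (if b s then aert pi1 C L else Y) pi1) pi2 (s, h)
                 <= sepsum (fadd L pi1) pi2 (s, h).
  by apply: sepsum_mono_stack => // h'; apply: leeD2r; move: (L_pre (s, h')); case: (b s).
pose W st := sepsum (fadd L pi1) pi2 st - P st.
have WE st : W st + P st = sepsum (fadd L pi1) pi2 st by rewrite subeK.
have W_framed : framed W L by move=> st; rewrite WE.
move=> st; rewrite -WE; apply: leeD2r; apply: lfp_le.
  move=> st'; rewrite leeBrDr // addeC subee //.
  exact: sepsum_ge0 (fadd_ge0 L_inA) pi2_ge0.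
case=> s h; rewrite /= addeC iv_select leeBrDr //; apply: le_trans (L_dom s h).
by case: (b s); [apply: IH | apply: ZY].
Qed.

Lemma aert_frame C : (forall x, x \in mods C -> notinVars x pi2) ->
  frame_preserving C.
Proof.
elim/prog_atomic_ind: C => [e|C atC|C1 p C2 IH1 IH2|b C1 C2 IH1 IH2|C1 C2 IH1 IH2|b C IH] /=.
- by move=> _; apply: frame_preserving_tick.
- exact: frame_preserving_atomic.
- by case/forall_mem_cat=> /IH1 ? /IH2 ?; apply: frame_preserving_pchoice.
- by case/forall_mem_cat=> /IH1 ? /IH2 ?; apply: frame_preserving_if.
- by case/forall_mem_cat=> /IH1 ? /IH2 ?; apply: frame_preserving_seq.
- by move/IH; apply: frame_preserving_while.
Qed.

End Frame.

Theorem mainTheorem6 (R : realType) (V : finType) (pi1 pi2 : state V -> R) :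
  (forall st, (0 <= pi1 st)%R) ->
  (forall st, (0 <= pi2 st)%R) ->
  (forall st, liftE pi1 st <= sepsum (liftE pi1) (liftE pi2) st) ->
  forall (C : prog V) (X : fn R V),
    inA (liftE pi1) X ->
    (forall x, x \in mods C -> notinVars x pi2) ->
    (forall st, X st + sepsum (liftE pi1) (liftE pi2) st
                <= sepsum (fadd X (liftE pi1)) (liftE pi2) st) ->
    forall st,
      aert (sepsum (liftE pi1) (liftE pi2)) C X st
      <= sepsum (fadd (aert (liftE pi1) C X) (liftE pi1)) (liftE pi2) st
         - sepsum (liftE pi1) (liftE pi2) st.
Proof.
(* pi1 <= pi1 (+) pi2 only serves to place X in A_(pi1 (+) pi2), which the
   frame argument never needs. *)
move=> pi1_ge0 pi2_ge0 _ C X X_inA pi2_mods X_framed st.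
have P_fin st' : sepsum (liftE pi1) (liftE pi2) st' \is a fin_num.
  case: st' => s h; rewrite ge0_fin_numE; last first.
    by apply: sepsum_ge0 => st''; rewrite lee_fin.
  have := sepsum_le_split (liftE pi1) (liftE pi2) s (hdisj0 h).
  by rewrite hunion0 => /le_lt_trans; apply; rewrite ltey.
have pi2_mods' x : x \in mods C -> notinVars x (liftE pi2).
  by move=> /pi2_mods pi2x s h v; rewrite /liftE pi2x.
rewrite leeBrDr //.
by apply: aert_frame => // st'; rewrite lee_fin.
Qed.
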